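(* Let $f:V\to W$ be a smooth map between finite-dimensional real inner product spaces with $|f|_{[r]}<\infty$, and let $P$ be a monopolar $k$-chain in $V$. Then $|f_*P|^{\natural_r}\le|f|_{[r]}\,|P|^{\natural_r}$.
   Context: For a simple $k$-vector $\alpha=w_1\wedge\dots\wedge w_k$, $M(\alpha)=\sqrt{\det\langle w_i,w_j\rangle}$. A monopolar $k$-chain in $V$ is a finite formal sum $\sum_i(p_i;\alpha_i)$, $p_i\in V$, $\alpha_i\in\Lambda_k(V)$, linear in the second slot at each point. $T_u(p;\alpha)=(p+u;\alpha)$, $\Delta_u=T_u-\mathrm{id}$, $\Delta^j_U=\Delta_{u_1}\circ\dots\circ\Delta_{u_j}$ for $U=(u_1,\dots,u_j)$, $\|\Delta^j_U(p;\alpha)\|_j=|u_1|\cdots|u_j|M(\alpha)$. A $k$-form is a linear functional $\omega$ on monopolar $k$-chains; $\|\omega\|_0=\sup\{|\omega(p;\alpha)|:\alpha$ simple, $M(\alpha)=1\}$, $\|\omega\|_j=\sup\{|\omega(\Delta^j_U(p;\alpha))|:\|\Delta^j_U(p;\alpha)\|_j=1\}$, $|\omega|^{\natural_r}=\max_{0\le j\le r}\|\omega\|_j$, $\mathcal B_k^r$ = forms with finite $|\omega|^{\natural_r}$. For a chain $P$, $|P|^{\natural_r}=\sup_{0\ne\omega\in\mathcal B_k^r}\omega(P)/|\omega|^{\natural_r}$. Pushforward: $f_*(x;v_1\wedge\dots\wedge v_k)=(f(x);Df_xv_1\wedge\dots\wedge Df_xv_k)$, extended linearly. $\|f\|_{[j]}=\sup|f_*\Delta^j_U(x;\alpha)|^{\natural_j}/\|\Delta^j_U(x;\alpha)\|_j$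 over $x$, nonzero $U$, nonzero simple $\alpha$; $|f|_{[r]}=\max\{\|f\|_{[0]},\dots,\|f\|_{[r]}\}$. *)

From HB Require Import structures.
From mathcomp Require Import all_boot all_order all_algebra.
From mathcomp Require Import all_classical all_reals all_analysis.
Set Implicit Arguments. Unset Strict Implicit. Unset Printing Implicit Defensive.
Import Order.TTheory GRing.Theory Num.Theory.
Import numFieldNormedType.Exports.
Local Open Scope classical_set_scope.
Local Open Scope ring_scope.

Section Chains.
Variable R : realType.

(* The finite-dimensional real inner product space V is modelled by 'rV[R]_n
   with the standard (Euclidean) inner product. *)
Definition dotv (n : nat) (u v : 'rV[R]_n) : R := (u *m v^T) 0 0.
Definition enorm (n : nat) (u : 'rV[R]_n) : R := Num.sqrt (dotv u u).

(* A simple k-vector w_1 /\ ... /\ w_k is represented by the family w. *)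
Definition gram (n k : nat) (w : 'I_k -> 'rV[R]_n) : 'M[R]_k :=
  \matrix_(i, j) dotv (w i) (w j).
Definition mass (n k : nat) (w : 'I_k -> 'rV[R]_n) : R :=
  Num.sqrt (\det (gram w)).

(* A monopolar k-chain: finite formal sum  sum_i c_i (p_i ; w_i1 /\ ... /\ w_ik). *)
Definition chain (n k : nat) := seq (R * 'rV[R]_n * ('I_k -> 'rV[R]_n)).

(* A k-form: linear functional on monopolar k-chains, i.e. at each point a
   linear functional on Lambda_k(V), i.e. an alternating k-linear map. *)
Definition form (n k : nat) := 'rV[R]_n -> ('I_k -> 'rV[R]_n) -> R.

Definition upd (n k : nat) (w : 'I_k -> 'rV[R]_n) (i : 'I_k) (x : 'rV[R]_n) :=
  fun j => if j == i then x else w j.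

Definition is_kform (n k : nat) (om : form n k) : Prop :=
  forall p : 'rV[R]_n,
    (forall (w : 'I_k -> 'rV[R]_n) (i : 'I_k) (a : R) (u v : 'rV[R]_n),
        om p (upd w i (a *: u + v)) = a * om p (upd w i u) + om p (upd w i v))
    /\ (forall (w : 'I_k -> 'rV[R]_n) (i j : 'I_k), i != j -> w i = w j -> om p w = 0).

Definition evalf (n k : nat) (om : form n k) (P : chain n k) : R :=
  \sum_(t <- P) t.1.1 * om t.1.2 t.2.

Definition diffchain (n k j : nat) (p : 'rV[R]_n) (U : 'I_j -> 'rV[R]_n)
    (w : 'I_k -> 'rV[R]_n) : chain n k :=
  [seq ((-1) ^+ (j - #|A|), p + \sum_(i in A) U i, w) | A : {set 'I_j}].

(* || Delta^j_U (p; alpha) ||_j = |u_1| ... |u_j| M(alpha) *)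
Definition dnorm (n k j : nat) (U : 'I_j -> 'rV[R]_n) (w : 'I_k -> 'rV[R]_n) : R :=
  (\prod_(i < j) enorm (U i)) * mass w.

Local Open Scope ereal_scope.

(* ||omega||_j (for j = 0 this is literally ||omega||_0, as Delta^0 = id and
   the empty product is 1).  Sups of nonnegative quantities; sup of the empty
   set is taken to be 0. *)
Definition formnorm_j (n k : nat) (om : form n k) (j : nat) : \bar R :=
  ereal_sup (0 |` [set x | exists (p : 'rV[R]_n) (U : 'I_j -> 'rV[R]_n)
                             (w : 'I_k -> 'rV[R]_n),
      dnorm U w = 1%R /\ x = (`| evalf om (diffchain p U w) |)%:E]).

Definition formnorm (n k r : nat) (om : form n k) : \bar R :=
  \big[Order.max/0]_(j < r.+1) formnorm_j om j.

Definition chainnorm (n k r : nat) (P : chain n k) : \bar R :=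
  ereal_sup (0 |` [set x | exists om : form n k,
      [/\ is_kform om,
          (exists p w, om p w <> 0%R),
          formnorm r om < +oo &
          x = (evalf om P / fine (formnorm r om))%:E]]).

Definition push (n m k : nat) (f : 'rV[R]_n -> 'rV[R]_m) (P : chain n k) : chain m k :=
  map (fun t : R * 'rV[R]_n * ('I_k -> 'rV[R]_n) =>
         let: (c, p, w) := t in (c, f p, fun i : 'I_k => 'd f p (w i))) P.

Definition mapnorm_j (n m k : nat) (f : 'rV[R]_n -> 'rV[R]_m) (j : nat) : \bar R :=
  ereal_sup (0 |` [set x | exists (p : 'rV[R]_n) (U : 'I_j -> 'rV[R]_n)
                             (w : 'I_k -> 'rV[R]_n),
      [/\ (forall i, U i != 0%R), mass w != 0%R &
          x = chainnorm j (push f (diffchain p U w)) * ((dnorm U w)^-1)%:E]]).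

Definition mapnorm (n m k r : nat) (f : 'rV[R]_n -> 'rV[R]_m) : \bar R :=
  \big[Order.max/0]_(j < r.+1) mapnorm_j k f j.

Local Close Scope ereal_scope.

Fixpoint diffk (n m : nat) (d : nat) (f : 'rV[R]_n -> 'rV[R]_m) : Prop :=
  match d with
  | 0 => True
  | d'.+1 => (forall x, differentiable f x) /\
             (forall v : 'rV[R]_n, diffk d' (fun x => 'd f x v))
  end.
Definition smooth (n m : nat) (f : 'rV[R]_n -> 'rV[R]_m) : Prop :=
  forall d, diffk d f.

End Chains.

(** The pullback [(f^* om)(p; w) = om(f p; Df_p w)] of a k-form is dual to the
    pushforward: [om(f_* P) = (f^* om)(P)].  Testing [f^* om] on a difference
    chain [D] with [||D||_j = 1] gives
    [|om(f_* D)| <= |f_* D|^{nat_j} |om|^{nat_j} <= |f|_[r] |om|^{nat_r}],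
    so [|f^* om|^{nat_r} <= |f|_[r] |om|^{nat_r}], and then
    [om(f_* P) = (f^* om)(P) <= |P|^{nat_r} |f|_[r] |om|^{nat_r}] bounds every
    quotient in the supremum defining [|f_* P|^{nat_r}].
    The duality [|om(Q)| <= |Q|^{nat_r} |om|^{nat_r}] needs [|om|^{nat_r} > 0]
    for a nonzero form: an alternating form vanishes on linearly dependent
    families, i.e. on those with a singular Gram matrix, and Gram determinants
    are nonnegative, so a nonzero form is nonzero on a family of positive mass,
    which rescales to a family of mass one. *)
From Pilot Require Import Defs.
From HB Require Import structures.
From mathcomp Require Import all_boot all_order all_algebra.
From mathcomp Require Import all_classical all_reals all_analysis.
Import Order.TTheory GRing.Theory Num.Theory.
Import numFieldNormedType.Exports.
Set Implicit Arguments. Unset Strict Implicit. Unset Printing Implicit Defensive.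
Local Open Scope ring_scope.

Section GramDeterminant.
Variable R : realFieldType.

Lemma mul_tr_selfE n (a : 'rV[R]_n) : (a *m a^T) 0 0 = \sum_j a 0 j ^+ 2.
Proof. by rewrite mxE; apply: eq_bigr => j _; rewrite mxE expr2. Qed.

Lemma mul_tr_self_ge0 n (a : 'rV[R]_n) : 0 <= (a *m a^T) 0 0.
Proof. by rewrite mul_tr_selfE sumr_ge0 // => j _; rewrite sqr_ge0. Qed.

Lemma mul_tr_self_eq0 n (a : 'rV[R]_n) : (a *m a^T) 0 0 = 0 -> a = 0.
Proof.
rewrite mul_tr_selfE => /psumr_eq0P a0; apply/rowP => j; rewrite mxE.
by apply/eqP; rewrite -sqrf_eq0 a0 // => i _; rewrite sqr_ge0.
Qed.

Lemma det_mul_tr_ge0 k n (W : 'M[R]_(k, n)) : 0 <= \det (W *m W^T).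
Proof.
elim: k W => [|k IHk] W; first by rewrite det_mx00.
pose a := @usubmx R 1 k n W; pose B := @dsubmx R 1 k n W.
pose s := (a *m a^T) 0 0; pose c := s^-1 *: (B *m a^T).
pose X := B - c *m a.
pose E : 'M[R]_(1 + k) := block_mx 1%:M 0 (- c) 1%:M.
(* Gaussian elimination of the first row: [E] is unimodular and [E W] has
   rows [a] and [X], with [X] orthogonal to [a]. *)
have Xa0 : X *m a^T = 0.
  rewrite mulmxBl -mulmxA [a *m a^T]mx11_scalar -/s mul_mx_scalar.
  rewrite /c scalerA; have [s0|s_neq0] := eqVneq s 0.
    by rewrite (mul_tr_self_eq0 s0) trmx0 !mulmx0 scaler0 subr0.
  by rewrite mulfV // scale1r subrr.
have aX0 : a *m X^T = 0 by rewrite -(trmxK a) -trmx_mul Xa0 trmx0.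
have detE : \det E = 1 by rewrite det_lblock !det1 mulr1.
have EW : E *m W = col_mx a X.
  rewrite -[W in LHS](@vsubmxK _ 1 k) mul_block_col.
  by rewrite !mul1mx mul0mx addr0 mulNmx addrC.
have -> : \det (W *m W^T) = \det ((E *m W) *m (E *m W)^T).
  by rewrite trmx_mul !mulmxA -[E *m W *m W^T]mulmxA !det_mulmx det_tr detE
    !mul1r mulr1.
rewrite EW tr_col_mx mul_col_row Xa0 aX0 det_ublock [a *m a^T]mx11_scalar.
by rewrite det_scalar1 mulr_ge0 ?mul_tr_self_ge0.
Qed.

End GramDeterminant.

Section AlternatingForms.
Variables (R : realType) (n k : nat).
Implicit Types (v w : 'I_k -> 'rV[R]_n) (p : 'rV[R]_n).

Lemma gramE v : gram v = \matrix_i v i *m (\matrix_i v i)^T.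
Proof.
apply/matrixP => i j; rewrite !mxE /dotv mxE.
by apply: eq_bigr => l _; rewrite !mxE.
Qed.

Lemma upd_id v i : upd v i (v i) = v.
Proof. by apply: funext => j; rewrite /upd; case: eqP => // ->. Qed.

Lemma gram_updZ v i c :
  \det (gram (upd v i (c *: v i))) = c ^+ 2 * \det (gram v).
Proof.
pose D := diag_mx (\row_j (if j == i then c else 1)).
rewrite !gramE; have -> : \matrix_j upd v i (c *: v i) j = D *m \matrix_j v j.
  apply/matrixP => j l; rewrite mul_diag_mx !mxE /upd.
  by case: eqP => [->|_]; rewrite ?mxE ?mul1r.
have detD : \det D = c.
  rewrite det_diag (bigD1 i) //= mxE eqxx big1 ?mulr1 // => j /negbTE j_neq_i.
  by rewrite mxE j_neq_i.
rewrite trmx_mul mulmxA -(mulmxA D) !det_mulmx det_tr detD.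
by rewrite mulrC mulrA -expr2.
Qed.

Lemma mass_updZ v i c : mass (upd v i (c *: v i)) = `|c| * mass v.
Proof. by rewrite /mass gram_updZ sqrtrM ?sqr_ge0 // sqrtr_sqr. Qed.

Variables (om : Defs.form R n k) (omP : is_kform om).

Lemma kform_upd0 p v i : om p (upd v i 0) = 0.
Proof.
have [omL _] := omP p; have := omL v i 1 0 0.
by rewrite scale1r addr0 mul1r -{1}[om p _]addr0 => /addrI <-.
Qed.

Lemma kform_updZ p v i a x : om p (upd v i (a *: x)) = a * om p (upd v i x).
Proof. by have [omL _] := omP p; rewrite -[a *: x]addr0 omL kform_upd0 addr0. Qed.

Lemma kform_upd_sum p v i (I : Type) (s : seq I) (F : I -> 'rV[R]_n) :
  om p (upd v i (\sum_(l <- s) F l)) = \sum_(l <- s) om p (upd v i (F l)).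
Proof.
have [omL _] := omP p; elim: s => [|x s IHs].
  by rewrite !big_nil kform_upd0.
by rewrite !big_cons -{1}[F x]scale1r omL mul1r IHs.
Qed.

Lemma kform_dependent p v (x : 'rV[R]_k) :
  x != 0 -> \sum_i x 0 i *: v i = 0 -> om p v = 0.
Proof.
move=> x_neq0 xv0; have [i0 xi0_neq0] : exists i0, x 0 i0 != 0.
  apply/existsP; apply: contraNT x_neq0 => /existsPn x0.
  by apply/eqP/rowP => j; rewrite mxE; apply/eqP/negPn/x0.
(* Replacing [v i0] by the vanishing combination leaves only the [i0] term,
   since every other term has a repeated vector. *)
have /eqP := kform_upd0 p v i0.
rewrite -xv0 kform_upd_sum (bigD1 i0) //= kform_updZ upd_id big1 ?addr0.
  by rewrite mulf_eq0 (negbTE xi0_neq0) => /eqP.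
move=> j j_neq_i0; rewrite kform_updZ (proj2 (omP p) _ i0 j) ?mulr0 //.
  by rewrite eq_sym.
by rewrite /upd eqxx (negbTE j_neq_i0).
Qed.

Lemma kform_gram_det_gt0 p v : om p v != 0 -> 0 < \det (gram v).
Proof.
move=> omv_neq0; rewrite lt_def gramE det_mul_tr_ge0 andbT.
apply: contra omv_neq0 => /det0P [x x_neq0 x_ker]; apply/eqP.
apply: (kform_dependent p x_neq0).
rewrite -[RHS](mul_tr_self_eq0 (a := x *m \matrix_i v i)).
  by rewrite mulmx_sum_row; apply: eq_bigr => i _; rewrite rowK.
by rewrite trmx_mul mulmxA -(mulmxA x) x_ker mul0mx mxE.
Qed.

End AlternatingForms.

Lemma kform_mass1 (R : realType) n k (om : Defs.form R n k) p v :
  is_kform om -> om p v != 0 -> exists w, mass w = 1 /\ om p w != 0.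
Proof.
case: k om v => [|k] om v omP omv_neq0.
  by exists v; rewrite /mass det_mx00 sqrtr1.
have mass_gt0 : 0 < mass v by rewrite sqrtr_gt0 (kform_gram_det_gt0 omP omv_neq0).
exists (upd v ord0 ((mass v)^-1 *: v ord0)); split.
  by rewrite mass_updZ gtr0_norm ?invr_gt0 // mulVf ?gt_eqF.
by rewrite kform_updZ // upd_id mulf_neq0 // invr_eq0 gt_eqF.
Qed.

Local Open Scope ereal_scope.

Section FormNorms.
Variables (R : realType) (n k : nat).
Implicit Types (om : Defs.form R n k) (Q : chain R n k).

Lemma formnorm_j_ge0 om j : 0 <= formnorm_j om j.
Proof. by apply: ereal_sup_ubound; left. Qed.

Lemma formnorm_j_le om j r : (j <= r)%N -> formnorm_j om j <= formnorm r om.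
Proof. by move=> jr; apply: (le_bigmax _ _ (Ordinal (jr : j < r.+1)%N)). Qed.

Lemma formnorm_ge0 om r : 0 <= formnorm r om.
Proof. exact: le_trans (formnorm_j_ge0 om 0) (formnorm_j_le om (leq0n r)). Qed.

Lemma formnorm_le om j r : (j <= r)%N -> formnorm j om <= formnorm r om.
Proof.
move=> jr; apply/bigmax_leP; split=> [|i _]; first exact: formnorm_ge0.
by apply: formnorm_j_le; rewrite (leq_trans _ jr) // -ltnS.
Qed.

Lemma chainnorm_ge0 r Q : 0 <= chainnorm r Q.
Proof. by apply: ereal_sup_ubound; left. Qed.

Lemma evalf_diffchain0 om p (U : 'I_0 -> 'rV[R]_n) w :
  evalf om (diffchain p U w) = om p w.
Proof.
rewrite /evalf /diffchain big_image /= (big_pred1 finset.set0) => [|A].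
  by rewrite cards0 expr0 big_set0 addr0 mul1r.
by apply/esym/eqP/setP => -[].
Qed.

Lemma formnorm_gt0 om r p v :
  is_kform om -> (om p v != 0)%R -> 0 < formnorm r om.
Proof.
move=> omP omv_neq0; have [w [w1 omw_neq0]] := kform_mass1 omP omv_neq0.
apply: lt_le_trans (formnorm_j_le om (leq0n r)).
apply: (@lt_le_trans _ _ (`|om p w|)%:E); first by rewrite lte_fin normr_gt0.
apply: ereal_sup_ubound; right; exists p, (fun=> 0%R), w.
by rewrite /dnorm big_ord0 mul1r evalf_diffchain0.
Qed.

Definition oppf om : Defs.form R n k := fun p w => (- om p w)%R.

Lemma evalf_oppf om Q : evalf (oppf om) Q = (- evalf om Q)%R.
Proof. by rewrite /evalf -sumrN; apply: eq_bigr => t _; rewrite mulrN. Qed.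

Lemma kform_oppf om : is_kform om -> is_kform (oppf om).
Proof.
move=> omP p; have [omL omA] := omP p; split=> [w i a u v|w i j ij wij].
  by rewrite /oppf omL opprD mulrN.
by rewrite /oppf (omA w i j ij wij) oppr0.
Qed.

Lemma formnorm_oppf om r : formnorm r (oppf om) = formnorm r om.
Proof.
apply: eq_bigr => j _; congr (ereal_sup (_ |` _)); rewrite funeqE => x.
by rewrite propeqE; split=> -[p [U [w [Uw1 ->]]]];
  exists p, U, w; rewrite evalf_oppf normrN.
Qed.

Lemma evalf_div_le_chainnorm om r Q :
  is_kform om -> (exists p w, om p w <> 0%R) -> formnorm r om < +oo ->
  (evalf om Q / fine (formnorm r om))%:E <= chainnorm r Q.
Proof. by move=> omP om_neq0 om_fin; apply: ereal_sup_ubound; right; exists om.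
Qed.

Lemma normr_evalf_le om r Q : is_kform om -> formnorm r om < +oo ->
  (`|evalf om Q|)%:E <= chainnorm r Q * formnorm r om.
Proof.
move=> omP om_fin.
have [om_neq0|om0] := pselect (exists p v, om p v <> 0%R); last first.
  rewrite (_ : evalf om Q = 0%R) ?normr0 ?mule_ge0 ?chainnorm_ge0
    ?formnorm_ge0 //.
  rewrite /evalf big1 // => t _.
  have [->|/eqP omt_neq0] := eqVneq (om t.1.2 t.2) 0%R; first by rewrite mulr0.
  by case: om0; exists t.1.2, t.2.
have [p [v /eqP omv_neq0]] := om_neq0; have om_gt0 := formnorm_gt0 r omP omv_neq0.
have om_fin_num : formnorm r om \is a fin_num.
  by rewrite ge0_fin_numE ?formnorm_ge0.
rewrite -(fineK om_fin_num) -lee_pdivrMr ?fine_gt0 ?om_gt0 // -EFinM.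
have [e_ge0|e_lt0] := lerP 0 (evalf om Q).
  by rewrite ger0_norm //; apply: evalf_div_le_chainnorm.
rewrite ltr0_norm // -evalf_oppf -(formnorm_oppf om r).
apply: evalf_div_le_chainnorm; first exact: kform_oppf.
  by exists p, v; apply/eqP; rewrite oppr_eq0.
by rewrite formnorm_oppf.
Qed.

End FormNorms.

Section Pullback.
Variables (R : realType) (n m k : nat) (f : 'rV[R]_n -> 'rV[R]_m).

Lemma mapnorm_j_le j r : (j <= r)%N -> mapnorm_j k f j <= mapnorm k r f.
Proof. by move=> jr; apply: (le_bigmax _ _ (Ordinal (jr : j < r.+1)%N)). Qed.

Lemma mapnorm_ge0 r : 0 <= mapnorm k r f.
Proof.
apply: le_trans (mapnorm_j_le (leq0n r)).
by apply: ereal_sup_ubound; left.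
Qed.

Lemma enorm0 : enorm (0 : 'rV[R]_n) = 0%R.
Proof. by rewrite /enorm /dotv mul0mx mxE sqrtr0. Qed.

Lemma dnorm_neq0 j (U : 'I_j -> 'rV[R]_n) (w : 'I_k -> 'rV[R]_n) :
  (dnorm U w != 0)%R -> (forall i, U i != 0)%R /\ (mass w != 0)%R.
Proof.
rewrite /dnorm mulf_eq0 negb_or => /andP[/prodf_neq0 U_neq0 ->]; split=> // i.
by apply: contra_neq (U_neq0 i isT) => ->; rewrite enorm0.
Qed.

Definition pull (om : Defs.form R m k) : Defs.form R n k :=
  fun p w => om (f p) (fun i => 'd f p (w i)).

Lemma evalf_pull om P : evalf (pull om) P = evalf om (push f P).
Proof. by rewrite /evalf /push big_map; apply: eq_bigr => -[[c p] w]. Qed.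

Lemma kform_pull om : is_kform om -> is_kform (pull om).
Proof.
move=> omP p; have [omL omA] := omP (f p); split=> [w i a u v|w i j ij wij].
  have dfu x : (fun l => 'd f p (upd w i x l)) =
               upd (fun l => 'd f p (w l)) i ('d f p x).
    by apply: funext => l; rewrite /upd; case: eqP.
  by rewrite /pull !dfu linearD linearZ omL.
by rewrite /pull (omA _ i j ij) //= wij.
Qed.

Lemma formnorm_j_pull_le om r j : is_kform om -> formnorm r om < +oo ->
  (j <= r)%N -> formnorm_j (pull om) j <= mapnorm k r f * formnorm r om.
Proof.
move=> omP om_fin jr; apply/ereal_supP => _ [->|[p [U [w [Uw1 ->]]]]].
  by rewrite mule_ge0 ?mapnorm_ge0 ?formnorm_ge0.
have omj_fin : formnorm j om < +oo := le_lt_trans (formnorm_le om jr) om_fin.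
rewrite evalf_pull; apply: le_trans (normr_evalf_le _ omP omj_fin) _.
apply: lee_pmul; rewrite ?chainnorm_ge0 ?formnorm_ge0 ?formnorm_le //.
apply: le_trans (mapnorm_j_le jr); apply: ereal_sup_ubound; right.
have [U_neq0 w_neq0] : (forall i, U i != 0)%R /\ (mass w != 0)%R.
  by apply: dnorm_neq0; rewrite Uw1 oner_neq0.
by exists p, U, w; rewrite Uw1 invr1 mule1.
Qed.

Lemma formnorm_pull_le om r : is_kform om -> formnorm r om < +oo ->
  formnorm r (pull om) <= mapnorm k r f * formnorm r om.
Proof.
move=> omP om_fin; apply/bigmax_leP; split=> [|j _].
  by rewrite mule_ge0 ?mapnorm_ge0 ?formnorm_ge0.
by apply: (formnorm_j_pull_le omP om_fin); rewrite -ltnS.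
Qed.

End Pullback.

Theorem mainTheorem6 (R : realType) (n m k r : nat)
    (f : 'rV[R]_n -> 'rV[R]_m) :
  smooth f -> (mapnorm k r f < +oo)%E ->
  forall P : chain R n k,
    (chainnorm r (push f P) <= mapnorm k r f * chainnorm r P)%E.
Proof.
move=> _ f_fin P; apply/ereal_supP => _ [->|[om [omP [p [v omv]] om_fin ->]]].
  by rewrite mule_ge0 ?mapnorm_ge0 ?chainnorm_ge0.
have om_gt0 := formnorm_gt0 r omP (introN eqP omv).
have om_fin_num : formnorm r om \is a fin_num.
  by rewrite ge0_fin_numE ?formnorm_ge0.
have a_gt0 : (0 < fine (formnorm r om))%R by rewrite fine_gt0 ?om_gt0.
rewrite EFinM lee_pdivrMr // fineK // -evalf_pull.
have pull_fin : formnorm r (pull f om) < +oo.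
  apply: le_lt_trans (formnorm_pull_le f omP om_fin) _.
  by rewrite lte_mul_pinfty ?mapnorm_ge0 ?ge0_fin_numE ?mapnorm_ge0.
apply: le_trans (_ : (`|evalf (pull f om) P|)%:E <= _).
  by rewrite lee_fin ler_norm.
apply: le_trans (normr_evalf_le P (kform_pull f omP) pull_fin) _.
rewrite (muleC (mapnorm k r f)) -muleA.
by rewrite lee_wpmul2l ?chainnorm_ge0 ?formnorm_pull_le.
Qed.
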